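(* Let $d\ge 2$ and $p\ge 2$ be integers and let $X\in\mathcal{A}^d_{p,p}$. Put $\widetilde X:=\operatorname{tr}_{2,\ldots,2p-1}\big(XV^{(p-1)}\big)$, an operator on systems $1$ and $2p$. Then $\widetilde X\in\mathcal{A}^d_{1,1}$ (as an operator on systems $1,2p$), and $$V^{(p-1)}XV^{(p-1)}=\widetilde X\otimes \prod_{k=1}^{p-1}W_{p+1-k,\,p+k},$$ where the first factor acts on systems $1,2p$ and the second on systems $2,\ldots,2p-1$.
   Context: Consider $(\mathbb{C}^d)^{\otimes 2p}$ with tensor factors (systems) labelled $1,\ldots,2p$. For distinct systems $a,b$ let $W_{a,b}=\sum_{i,j=1}^d |i\rangle\langle j|_a\otimes |i\rangle\langle j|_b$ (the partial transpose on system $b$ of the swap of $a$ and $b$; it equals $d$ times the projector onto the maximally entangled state of $a,b$), extended by the identity on the other systems. Define $V^{(p-1)}=\prod_{k=1}^{p-1}W_{p+1-k,\,p+k}$ (identity on systems $1$ and $2p$). For $\pi$ in the symmetric group $\mathcal{S}_{2p}$ let $V_\pi$ be the operator permuting the $2p$ tensor factors according to $\pi$. The algebra of partially transposed permutation operators is $\mathcal{A}^d_{p,p}=\operatorname{span}_{\mathbb{C}}\{V_\pi^{t_{p+1}\circ\cdots\circ t_{2p}}:\pi\in\mathcal{S}_{2p}\}$, where $t_k$ is the partial transposition (in the standard basis) on system $k$. Analogously $\mathcal{A}^d_{1,1}$ on two systems $a,b$ is $\operatorname{span}\{\mathbb{1},W_{a,b}\}$. *)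

(* Operators on (C^d)^{\otimes n} as matrices indexed by
   multi-indices i : {ffun 'I_n -> 'I_d}.  Systems are 0-based: the paper's
   system k (1 <= k <= n) is the ordinal k-1. *)
From HB Require Import structures.
From mathcomp Require Import all_boot all_order all_fingroup all_algebra.
Set Implicit Arguments. Unset Strict Implicit. Unset Printing Implicit Defensive.
Import GRing.Theory Num.Theory.
Local Open Scope ring_scope.

Section Ops.
Variable C : numClosedFieldType.
Variable d : nat.

Definition idx (n : nat) := {ffun 'I_n -> 'I_d}.
Definition op (n : nat) := idx n -> idx n -> C.

Definition idop {n} : op n := fun i j => (i == j)%:R.
Definition mulop {n} (A B : op n) : op n :=
  fun i j => \sum_(k : idx n) A i k * B k j.

Definition Wop {n} (a b : 'I_n) : op n := fun i j =>
  ((i a == i b) && (j a == j b) &&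
   [forall c, (c != a) && (c != b) ==> (i c == j c)])%:R.

(* V_pi : permutes tensor factors, V_pi (e_{j_1}..e_{j_n}) = e_{j_{pi^-1 1}}.. *)
Definition Vperm {n} (pi : {perm 'I_n}) : op n := fun i j =>
  [forall c, i (pi c) == j c]%:R.

Definition mixidx {n} (T : {set 'I_n}) (i j : idx n) : idx n :=
  [ffun c => if c \in T then j c else i c].
Definition ptrans {n} (T : {set 'I_n}) (A : op n) : op n :=
  fun i j => A (mixidx T i j) (mixidx T j i).

(* Number of systems 2p, written so that the first/last systems are ord0 and
   ord_max and the middle ones 2..2p-1 are indexed by 'I_((p-1)+(p-1)). *)
Definition nsys (p : nat) := (p.-1 + p.-1).+2.

(* A^d_{p,p}: span of partially transposed permutations, transposition on
   systems p+1..2p, i.e. 0-based ordinals c with p-1 < c. *)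
Definition in_App (p : nat) (X : op (nsys p)) : Prop :=
  exists a : {perm 'I_(nsys p)} -> C, forall i j,
    X i j = \sum_(pi : {perm 'I_(nsys p)})
              a pi * ptrans [set c : 'I_(nsys p) | (p.-1 < c)%N] (Vperm pi) i j.

Definition in_A11 (Y : op 2) : Prop :=
  exists a b : C, forall u v, Y u v = a * idop u v + b * Wop ord0 ord_max u v.

Definition mid {m} (c : 'I_m) : 'I_m.+2 := lift ord0 (lift ord_max c).

(* V^{(p-1)} = prod_{k=1}^{p-1} W_{p+1-k, p+k} on 2p systems
   (k = K-1 ranges over 'I_(p-1)) *)
Definition Vpm1 (p : nat) : op (nsys p) :=
  \big[mulop/idop]_(k < p.-1)
     Wop (mid (lshift p.-1 (rev_ord k))) (mid (rshift p.-1 k)).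

Definition Vmid (p : nat) : op (p.-1 + p.-1) :=
  \big[mulop/idop]_(k < p.-1) Wop (lshift p.-1 (rev_ord k)) (rshift p.-1 k).

Definition outer {m} (i : idx m.+2) : idx 2 :=
  [ffun c : 'I_2 => if c == ord0 then i ord0 else i ord_max].
Definition inner {m} (i : idx m.+2) : idx m := [ffun c => i (mid c)].

Definition glue {m} (u : idx 2) (k : idx m) : idx m.+2 :=
  [ffun c => match unlift ord0 c with
             | None => u ord0
             | Some c1 => match unlift ord_max c1 with
                          | None => u ord_max
                          | Some c2 => k c2 end end].

Definition ptr_mid {m} (Y : op m.+2) : op 2 :=
  fun u v => \sum_(k : idx m) Y (glue u k) (glue v k).

Definition tens {m} (A : op 2) (B : op m) : op m.+2 :=
  fun i j => A (outer i) (outer j) * B (inner i) (inner j).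

End Ops.

Arguments Vpm1 {C d} p.
Arguments Vmid {C d} p.
Arguments in_App {C d} p X.

From HB Require Import structures.
From mathcomp Require Import all_boot all_order all_fingroup all_algebra.
From mathcomp Require Import zify ring.
From Stdlib Require Import FunctionalExtensionality.
Set Implicit Arguments. Unset Strict Implicit. Unset Printing Implicit Defensive.
Import GRing.Theory Num.Theory.
Local Open Scope ring_scope.

(* V^(p-1) is the identity on the outer systems 1, 2p tensored with the rank-one
   operator |psi><psi| on the middle ones, where psi is the indicator of the
   palindromic multi-indices. Sandwiching any X between two copies of
   1 (x) |psi><psi| gives tr_mid(X V^(p-1)) (x) |psi><psi|: this is the product
   formula.
   By linearity, membership of the partial trace in A_{1,1} reduces to X a
   partially transposed permutation. A pair of palindromic middle indices is the
   same thing as one free middle multi-index w, and the entry (u, v) then counts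
   the w satisfying one equation "left value of slot c = right value of slot r c"
   per slot c, for a permutation r of the 2p slots. The two equations through a
   middle slot not fixed by r can be fused: this gives a permutation with one more
   fixed point and multiplies the count by d. Once r fixes every middle slot it
   fixes or swaps the two outer ones, and the count is a multiple of 1 or of W. *)

Section Operators.
Variables (C : numClosedFieldType) (d : nat).
Local Notation idx := (idx d).
Local Notation op := (op C d).
Local Notation idop := (@idop C d _).
Local Notation mulop := (@mulop C d _).

Lemma natr_andb (b1 b2 : bool) : (b1 && b2)%:R = b1%:R * b2%:R :> C.
Proof. by rewrite -natrM mulnb. Qed.

Lemma sum_delta (T : finType) (t0 : T) (F : T -> C) :
  \sum_(t : T) (t == t0)%:R * F t = F t0.
Proof.
rewrite (bigD1 t0) //= eqxx mul1r big1 ?addr0 // => t /negbTE ->.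
by rewrite mul0r.
Qed.

Lemma op_ext n (A B : op n) : (forall i j, A i j = B i j) -> A = B.
Proof.
by move=> AB; apply: functional_extensionality => i;
  apply: functional_extensionality => j; apply: AB.
Qed.

Lemma mul1op n (A : op n) : mulop idop A = A.
Proof.
apply: op_ext => i j.
by rewrite /mulop /idop; under eq_bigr do rewrite eq_sym; rewrite sum_delta.
Qed.

(** * Outer and middle systems *)

Section Tensor.
Variable m : nat.

Lemma lift0_max : lift ord0 (ord_max : 'I_m.+1) = ord_max :> 'I_m.+2.
Proof. exact: val_inj. Qed.

Lemma mid_inj : injective (@mid m).
Proof. by move=> s t /lift_inj /lift_inj. Qed.

Variant slot_spec : 'I_m.+2 -> Type :=
| SlotFirst : slot_spec ord0
| SlotLast : slot_spec ord_max
| SlotMid t : slot_spec (mid t).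

Lemma slotP c : slot_spec c.
Proof.
case: (unliftP ord0 c) => [c1 ->|->]; last exact: SlotFirst.
case: (unliftP ord_max c1) => [t ->|->]; first exact: SlotMid.
by rewrite lift0_max; exact: SlotLast.
Qed.

Lemma forall_slotE (P : pred 'I_m.+2) :
  [forall c, P c] = [&& P ord0, P ord_max & [forall t, P (mid t)]].
Proof.
apply/forallP/and3P => [h | [h0 hm /forallP ht] c]; last by case: (slotP c).
by split; last apply/forallP => t; apply: h.
Qed.

Lemma eq_ord0_mid (t : 'I_m) : (ord0 == mid t) = false.
Proof. by []. Qed.

Lemma val_mid (t : 'I_m) : val (mid t) = t.+1.
Proof. by rewrite /= /bump /=; case: t => t /= ht; lia. Qed.

Lemma eq_max_mid (t : 'I_m) : (ord_max == mid t) = false.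
Proof. by rewrite -(inj_eq val_inj) val_mid /=; case: t => t /= ht; lia. Qed.

Lemma glue_first (u : idx 2) (k : idx m) : glue u k ord0 = u ord0.
Proof. by rewrite ffunE unlift_none. Qed.

Lemma glue_last (u : idx 2) (k : idx m) : glue u k ord_max = u ord_max.
Proof. by rewrite ffunE -lift0_max liftK unlift_none. Qed.

Lemma glue_mid (u : idx 2) (k : idx m) t : glue u k (mid t) = k t.
Proof. by rewrite ffunE !liftK. Qed.

Lemma outer_first (i : idx m.+2) : outer i ord0 = i ord0.
Proof. by rewrite ffunE. Qed.

Lemma outer_last (i : idx m.+2) : outer i ord_max = i ord_max.
Proof. by rewrite ffunE. Qed.

Lemma idx2_ext (u v : idx 2) : u ord0 = v ord0 -> u ord_max = v ord_max -> u = v.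
Proof.
move=> h0 h1; apply/ffunP => c.
have [->|] := eqVneq c ord0; first exact: h0.
by case: c => -[|[|]] // ? _; rewrite (_ : Ordinal _ = ord_max) //; apply: val_inj.
Qed.

Lemma outer_glue (u : idx 2) (k : idx m) : outer (glue u k) = u.
Proof. by apply: idx2_ext; rewrite ?outer_first ?outer_last ?glue_first ?glue_last. Qed.

Lemma inner_glue (u : idx 2) (k : idx m) : inner (glue u k) = k.
Proof. by apply/ffunP => t; rewrite ffunE glue_mid. Qed.

Lemma glueK (i : idx m.+2) : glue (outer i) (inner i) = i.
Proof.
apply/ffunP => c; case: (slotP c).
- by rewrite glue_first outer_first.
- by rewrite glue_last outer_last.
- by move=> t; rewrite glue_mid ffunE.
Qed.

Lemma sum_glue (F : idx m.+2 -> C) :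
  \sum_(i : idx m.+2) F i = \sum_(u : idx 2) \sum_(k : idx m) F (glue u k).
Proof.
rewrite pair_big (reindex (fun z : idx 2 * idx m => glue z.1 z.2)) //=.
exists (fun i => (outer i, inner i)) => [[u k] _ | i _] /=.
  by rewrite outer_glue inner_glue.
exact: glueK.
Qed.

Lemma tens_mul (A A' : op 2) (B B' : op m) :
  mulop (tens A B) (tens A' B') = tens (mulop A A') (mulop B B').
Proof.
apply: op_ext => i j; rewrite /mulop /tens sum_glue mulr_suml.
apply: eq_bigr => u _; rewrite mulr_sumr; apply: eq_bigr => k _.
by rewrite outer_glue inner_glue mulrACA.
Qed.

Lemma tens_idop : tens idop idop = idop :> op m.+2.
Proof.
apply: op_ext => i j; rewrite /tens /idop -natr_andb; congr (nat_of_bool _)%:R.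
apply/andP/eqP => [[/eqP oij /eqP iij] | ->]; last by [].
by rewrite -(glueK i) oij iij glueK.
Qed.

Lemma Wop_mid (a b : 'I_m) : Wop C (mid a) (mid b) = tens idop (Wop C a b).
Proof.
apply: op_ext => i j; rewrite /tens /Wop /idop -natr_andb; congr (nat_of_bool _)%:R.
rewrite forall_slotE !eq_ord0_mid !eq_max_mid /= !ffunE.
have -> : (outer i == outer j) = (i ord0 == j ord0) && (i ord_max == j ord_max).
  apply/eqP/andP => [oij | [/eqP h0 /eqP h1]]; last first.
    by apply: idx2_ext; rewrite !(outer_first, outer_last).
  by rewrite -outer_first oij outer_first -outer_last oij outer_last.
have -> : [forall t, (t != a) && (t != b) ==> (inner i t == inner j t)] =
    [forall t, (mid t != mid a) && (mid t != mid b) ==> (i (mid t) == j (mid t))].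
  by apply: eq_forallb => t; rewrite !ffunE !(inj_eq mid_inj).
by case: (i ord0 == _); case: (i ord_max == _); rewrite ?andbF.
Qed.

Lemma big_tens_idop (I : Type) (r : seq I) (B : I -> op m) :
  \big[mulop/idop]_(x <- r) tens idop (B x) = tens idop (\big[mulop/idop]_(x <- r) B x).
Proof.
apply: (big_rec2 (fun Y Y' => Y = tens idop Y')) => [|x Y Y' _ ->].
  by rewrite tens_idop.
by rewrite tens_mul mul1op.
Qed.

Definition rank1op (f : idx m -> C) : op m := fun k k' => f k * f k'.

Lemma tens_rank1C f (i j : idx m.+2) :
  tens idop (rank1op f) i j = tens idop (rank1op f) j i.
Proof. by rewrite /tens /rank1op /idop eq_sym [f (inner i) * _]mulrC. Qed.

Lemma sum_tens_rank1 f (i : idx m.+2) (G : idx m.+2 -> C) :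
  \sum_l tens idop (rank1op f) i l * G l =
  f (inner i) * \sum_(k : idx m) f k * G (glue (outer i) k).
Proof.
rewrite sum_glue (bigD1 (outer i)) //= [X in _ + X]big1 ?addr0; last first.
  move=> u /negbTE ne; apply: big1 => k _.
  by rewrite /tens /idop outer_glue eq_sym ne !mul0r.
rewrite mulr_sumr; apply: eq_bigr => k _.
by rewrite /tens /rank1op /idop outer_glue inner_glue eqxx mul1r mulrA.
Qed.

Lemma ptr_mid_rank1 (X : op m.+2) f u v :
  ptr_mid (mulop X (tens idop (rank1op f))) u v =
  \sum_(k : idx m) \sum_(k' : idx m) f k * f k' * X (glue u k) (glue v k').
Proof.
apply: eq_bigr => k _; rewrite /mulop.
under eq_bigr do rewrite mulrC tens_rank1C.
rewrite sum_tens_rank1 outer_glue inner_glue mulr_sumr.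
by apply: eq_bigr => k' _; rewrite mulrA.
Qed.

Lemma tens_rank1_sandwich (X : op m.+2) f :
  mulop (mulop (tens idop (rank1op f)) X) (tens idop (rank1op f)) =
  tens (ptr_mid (mulop X (tens idop (rank1op f)))) (rank1op f).
Proof.
apply: op_ext => i j; rewrite {3}/tens ptr_mid_rank1 /mulop.
under eq_bigr do rewrite mulrC tens_rank1C sum_tens_rank1.
rewrite sum_tens_rank1 /rank1op exchange_big /= mulr_suml mulr_sumr.
apply: eq_bigr => k _; rewrite !mulr_sumr mulr_suml.
by apply: eq_bigr => k' _; ring.
Qed.

End Tensor.

(** * Products of W over disjoint pairs *)

Section DisjointPairs.
Variable n : nat.
Implicit Types (s : seq ('I_n * 'I_n)) (i j k : idx n).

Definition pairs_support s := unzip1 s ++ unzip2 s.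

Lemma pairs_support_consP a b s : uniq (pairs_support ((a, b) :: s)) ->
  [/\ a \notin pairs_support s, b \notin pairs_support s & uniq (pairs_support s)].
Proof.
rewrite /pairs_support /= -cat1s uniq_catCA /= !mem_cat !in_cons !negb_or.
by case/and3P => /and3P[-> _ ->] /andP[-> ->].
Qed.

Lemma Wop_mul_disjoint_step a b s i j k :
  a \notin pairs_support s -> b \notin pairs_support s ->
  [&& (i a == i b) && (k a == k b) &&
        [forall c, (c != a) && (c != b) ==> (i c == k c)],
      all (fun e => (k e.1 == k e.2) && (j e.1 == j e.2)) s &
      [forall c, (c \notin pairs_support s) ==> (k c == j c)]] =
  (k == [ffun c => if (c == a) || (c == b) then j c else i c]) &&
  (all (fun e => (i e.1 == i e.2) && (j e.1 == j e.2)) ((a, b) :: s) &&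
   [forall c, (c \notin pairs_support ((a, b) :: s)) ==> (i c == j c)]).
Proof.
move=> aS bS; set S := pairs_support s in aS bS *.
set k0 : idx n := [ffun c => if (c == a) || (c == b) then j c else i c].
have k0E c : k0 c = if (c == a) || (c == b) then j c else i c by rewrite ffunE.
have S_ab c : c \in S -> (c == a) || (c == b) = false.
  by move=> cS; apply/norP; split; apply/negP => /eqP ca; [move: aS | move: bS];
    rewrite -ca cS.
have mem_S e : e \in s -> (e.1 \in S) && (e.2 \in S).
  by move=> es; rewrite !mem_cat (map_f fst es) (map_f snd es) orbT.
pose L k := [&& (i a == i b) && (k a == k b) &&
    [forall c, (c != a) && (c != b) ==> (i c == k c)],
  all (fun e => (k e.1 == k e.2) && (j e.1 == j e.2)) s &
  [forall c, (c \notin S) ==> (k c == j c)]].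
rewrite -/(L k).
have L_k0 : L k0 = all (fun e => (i e.1 == i e.2) && (j e.1 == j e.2)) ((a, b) :: s) &&
    [forall c, (c \notin pairs_support ((a, b) :: s)) ==> (i c == j c)].
  rewrite /L !k0E !eqxx orbT /=.
  have -> : [forall c, (c != a) && (c != b) ==> (i c == k0 c)].
    by apply/forallP => c; apply/implyP => /andP[ca cb]; rewrite k0E (negbTE ca) (negbTE cb).
  have -> : all (fun e => (k0 e.1 == k0 e.2) && (j e.1 == j e.2)) s =
            all (fun e => (i e.1 == i e.2) && (j e.1 == j e.2)) s.
    by apply: eq_in_all => e /mem_S /andP[e1 e2]; rewrite !k0E !S_ab.
  have -> : [forall c, (c \notin S) ==> (k0 c == j c)] =
            [forall c, (c \notin pairs_support ((a, b) :: s)) ==> (i c == j c)].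
    apply: eq_forallb => c; rewrite k0E /S /pairs_support /= !(mem_cat, in_cons).
    by case: (c == a); case: (c == b); rewrite ?eqxx ?implybT ?orbT.
  by rewrite andbT !andbA.
have L_eq : L k -> k = k0.
  case/and3P => [/andP[_ /forallP koff] _ /forallP kS].
  apply/ffunP => c; rewrite k0E; case: ifP => hc.
    by apply/eqP/(implyP (kS c)); apply: contraTN hc => /S_ab ->.
  by apply/esym/eqP/(implyP (koff c)); rewrite -negb_or hc.
apply/idP/andP => [Lk | [/eqP -> ]]; last by rewrite L_k0.
by rewrite -L_k0 -(L_eq Lk) eqxx.
Qed.

Lemma big_Wop_disjoint s i j : uniq (pairs_support s) ->
  (\big[mulop/idop]_(e <- s) Wop C e.1 e.2) i j =
  (all (fun e => (i e.1 == i e.2) && (j e.1 == j e.2)) s &&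
   [forall c, (c \notin pairs_support s) ==> (i c == j c)])%:R.
Proof.
elim: s i => [|[a b] s IH] i.
  rewrite big_nil /idop => _; congr (nat_of_bool _)%:R.
  apply/eqP/forallP => [-> c | h]; first by rewrite eqxx implybT.
  by apply/ffunP => c; apply/eqP/h.
case/pairs_support_consP => aS bS uS.
rewrite big_cons {1}/mulop /=.
set P := \big[mulop/idop]_(e <- s) _.
under eq_bigr => k _ do
  rewrite /P (IH k uS) /Wop -natr_andb (Wop_mul_disjoint_step _ _ _ aS bS) natr_andb.
by rewrite sum_delta.
Qed.

End DisjointPairs.

(** * Palindromic multi-indices *)

Definition sym_under n (rho : 'I_n -> 'I_n) (k : idx n) := [forall t, k (rho t) == k t].

Definition rev_perm n : {perm 'I_n} := perm (@rev_ord_inj n).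

Lemma rev_permK n : involutive (rev_perm n).
Proof. by move=> t; rewrite !permE rev_ordK. Qed.

Section Palindromes.
Variable h : nat.

Lemma rev_ord_rshift (t : 'I_h) : rev_ord (rshift h t) = lshift h (rev_ord t).
Proof. by apply: val_inj => /=; case: t => t /= ht; lia. Qed.

Lemma rev_ord_lshift (t : 'I_h) : rev_ord (lshift h t) = rshift h (rev_ord t).
Proof. by rewrite -[in LHS](rev_ordK t) -rev_ord_rshift rev_ordK. Qed.

Lemma palindromeE (k : idx (h + h)) :
  sym_under (rev_perm _) k = [forall t, k (lshift h (rev_ord t)) == k (rshift h t)].
Proof.
rewrite /sym_under; under eq_forallb do rewrite permE.
apply/forallP/forallP => pal t; first by rewrite -rev_ord_rshift; apply: pal.
rewrite -(splitK t); case: split => l /=.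
  by rewrite rev_ord_lshift eq_sym -{1}(rev_ordK l); apply: pal.
by rewrite rev_ord_rshift; apply: pal.
Qed.

Definition mirror_pairs := [seq (lshift h (rev_ord t), rshift h t) | t <- index_enum 'I_h].

Lemma pairs_support_mirror :
  pairs_support mirror_pairs =
  [seq lshift h (rev_ord t) | t <- index_enum 'I_h] ++ [seq rshift h t | t <- index_enum 'I_h].
Proof. by rewrite /pairs_support /unzip1 /unzip2 -!map_comp. Qed.

Lemma uniq_mirror_support : uniq (pairs_support mirror_pairs).
Proof.
rewrite pairs_support_mirror cat_uniq !map_inj_uniq ?index_enum_uniq ?andbT //=.
- by apply/hasPn => _ /mapP[t _ ->]; apply/mapP => -[l _ /eqP]; rewrite eq_rlshift.
- exact: rshift_inj.
- by move=> t l /lshift_inj /rev_ord_inj.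
Qed.

Lemma mem_mirror_support c : c \in pairs_support mirror_pairs.
Proof.
rewrite pairs_support_mirror mem_cat -(splitK c); case: split => l /=.
  by rewrite -{1}(rev_ordK l) (map_f (fun t => lshift h (rev_ord t))) ?mem_index_enum.
by rewrite (map_f (@rshift h h)) ?mem_index_enum ?orbT.
Qed.

End Palindromes.

Lemma Vmid_rank1 p : Vmid p = rank1op (fun k => (sym_under (rev_perm _) k)%:R).
Proof.
apply: op_ext => i j; rewrite /Vmid /rank1op -natr_andb.
rewrite -(big_map (fun t => (lshift p.-1 (rev_ord t), rshift p.-1 t)) xpredT
  (fun e => Wop C e.1 e.2)) big_Wop_disjoint ?uniq_mirror_support //.
congr (nat_of_bool _)%:R; rewrite -/(mirror_pairs _).
rewrite (_ : [forall c, _] = true) ?andbT; last first.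
  by apply/forallP => c; rewrite mem_mirror_support.
rewrite all_map !palindromeE.
apply/allP/andP => [ij | [/forallP i_pal /forallP j_pal] t _]; last by rewrite /= i_pal j_pal.
by split; apply/forallP => t; have /andP[] := ij t (mem_index_enum t).
Qed.

Lemma Vpm1_tens p : Vpm1 p = tens idop (Vmid p).
Proof. by rewrite /Vpm1 /Vmid -big_tens_idop; apply: eq_bigr => t _; apply: Wop_mid. Qed.

Definition relabel n (rho : 'I_n -> 'I_n) (w : idx n) : idx n := [ffun t => w (rho t)].

Lemma sum_sym_pairs n (rho : 'I_n -> 'I_n) (T : {set 'I_n}) (F : idx n -> idx n -> C) :
  involutive rho -> (forall t, (rho t \in T) = (t \notin T)) ->
  \sum_k \sum_k' (sym_under rho k)%:R * (sym_under rho k')%:R * F k k' =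
  \sum_w F (mixidx T (relabel rho w) w) (mixidx T w (relabel rho w)).
Proof.
move=> rhoK rhoT; rewrite pair_big big_mkcond /=.
under eq_bigr do rewrite -natr_andb mulr_natl mulrb.
rewrite -big_mkcond (reindex (fun w => (mixidx T (relabel rho w) w,
                                      mixidx T w (relabel rho w)))) /=.
  apply: eq_bigl => w; apply/andP; split; apply/forallP => t; rewrite !ffunE rhoT rhoK;
    by case: (t \in T).
exists (fun z => mixidx T z.2 z.1) => [w _ | [k k'] /andP[/forallP k_sym /forallP k'_sym]].
  by apply/ffunP => t; rewrite !ffunE; case: (t \in T).
rewrite /=; congr (_, _); apply/ffunP => t; rewrite !ffunE ?rhoT; case: (t \in T) => //=.
- exact/eqP/k_sym.
- exact/eqP/k'_sym.
Qed.

(** * Counting matchings *)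

Definition upd n (w : idx n) (t : 'I_n) (x : 'I_d) : idx n :=
  [ffun c => if c == t then x else w c].

Lemma sum_upd n (t : 'I_n) (G : idx n -> C) :
  \sum_w \sum_(x : 'I_d) G (upd w t x) = d%:R * \sum_w G w.
Proof.
pose swap (z : idx n * 'I_d) := (upd z.1 t z.2, z.1 t).
have swapK : involutive swap.
  move=> [w x]; rewrite /swap /= ffunE eqxx; congr (_, _).
  by apply/ffunP => c; rewrite !ffunE; case: eqP => // ->.
rewrite pair_big (eq_bigr (fun z => G (swap z).1)) // (reindex_inj (can_inj swapK)).
under eq_bigr do rewrite swapK.
rewrite -(pair_big xpredT xpredT (fun w (_ : 'I_d) => G w)) mulr_sumr /=.
by apply: eq_bigr => w _; rewrite sumr_const card_ord mulr_natl.
Qed.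

Lemma forall_split2 (T : finType) (x y : T) (P : pred T) :
  [forall c, P c] = [&& P x, P y & [forall c, (c != x) && (c != y) ==> P c]].
Proof.
apply/forallP/and3P => [H | [Px Py /forallP H] c].
  by split; last apply/forallP => c; rewrite ?H ?implybT.
case: (c =P x) => [-> //|/eqP cx]; case: (c =P y) => [-> //|/eqP cy].
by apply: (implyP (H c)); rewrite cx cy.
Qed.

Section Matchings.
Variable m : nat.
Implicit Types (r : {perm 'I_m.+2}) (a b : idx 2) (w : idx m).

(* [w] fills the middle slots and [a], [b] the outer ones, on the left and on the
   right side respectively; [r] joins the left side of each slot to the right side
   of a slot. *)
Definition matches r a b w := [forall c, glue a w c == glue b w (r c)].

Definition match_count r a b : C := \sum_w (matches r a b w)%:R.

Lemma glue_upd a w t x c : glue a (upd w t x) c = if c == mid t then x else glue a w c.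
Proof.
case: (slotP c) => [||s]; rewrite ?glue_first ?glue_last ?glue_mid ?ffunE //.
  by rewrite eq_max_mid.
by rewrite (inj_eq (@mid_inj _)).
Qed.

Lemma matches_upd r a b w t x : r (mid t) != mid t ->
  matches r a b (upd w t x) =
  (x == glue b w (r (mid t))) && matches (tperm (mid t) (r^-1 (mid t)) * r)%g a b w.
Proof.
set s := mid t; set c0 := (r^-1 s)%g => s_moved.
have rc0 : r c0 = s by rewrite permKV.
have c0s : c0 != s by apply: contra_neq s_moved => c0s; rewrite -{1}c0s rc0.
have r_s c : (r c == s) = (c == c0) by rewrite -rc0 (inj_eq perm_inj).
rewrite /matches {1}(forall_split2 s c0) [in RHS](forall_split2 s c0).
have -> : [forall c, (c != s) && (c != c0) ==>
                      (glue a (upd w t x) c == glue b (upd w t x) (r c))] =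
          [forall c, (c != s) && (c != c0) ==>
                      (glue a w c == glue b w ((tperm s c0 * r)%g c))].
  apply: eq_forallb => c; case cs: (c == s); case cc0: (c == c0) => //=.
  by rewrite !glue_upd -/s cs r_s cc0 permM tpermD // 1?eq_sym ?cs ?cc0.
rewrite !glue_upd !permM tpermL tpermR rc0 -/s eqxx (negbTE s_moved) (negbTE c0s).
rewrite /s !glue_mid eqxx /=.
by case: (x =P _) => [->|]; rewrite ?eqxx.
Qed.

Lemma match_count_step r a b t : r (mid t) != mid t ->
  match_count (tperm (mid t) (r^-1 (mid t)) * r)%g a b = d%:R * match_count r a b.
Proof.
move=> t_moved; rewrite /match_count -(sum_upd t); apply: eq_bigr => w _.
by under eq_bigr do rewrite matches_upd // natr_andb; rewrite sum_delta.
Qed.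

Definition moved r := [set c | r c != c].

Lemma card_moved_step r t : r (mid t) != mid t ->
  (#|moved (tperm (mid t) (r^-1 (mid t)) * r)%g| < #|moved r|)%N.
Proof.
set s := mid t; set c0 := (r^-1 s)%g => s_moved.
have rc0 : r c0 = s by rewrite permKV.
apply: proper_card; apply/properP; split; last first.
  by exists s; rewrite !inE ?permM ?tpermL ?rc0 ?eqxx.
apply/subsetP => c; rewrite !inE permM.
case: (tpermP s c0 c) => [-> | -> | _ _]; rewrite ?rc0 ?eqxx // => _.
by apply: contra_neq s_moved => sc0; rewrite {1}sc0 rc0.
Qed.

Lemma perm_fixing_mid r : (forall t, r (mid t) = mid t) ->
  r ord0 = ord0 /\ r ord_max = ord_max \/ r ord0 = ord_max /\ r ord_max = ord0.
Proof.
move=> fix_mid.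
have r_end c : c = ord0 \/ c = ord_max -> r c = ord0 \/ r c = ord_max.
  move=> c_end; move E: (r c) => rc; case: (slotP rc) E => [_|_|t]; [by left|by right|].
  rewrite -fix_mid => /perm_inj ct; rewrite ct in c_end.
  by case: c_end => /eqP; rewrite eq_sym ?eq_ord0_mid ?eq_max_mid.
case: (r_end ord0 (or_introl erefl)) => r0; case: (r_end ord_max (or_intror erefl)) => rmax;
  [| by left | by right |]; by move: (perm_inj (etrans r0 (esym rmax))) => /(congr1 val).
Qed.

Lemma matches_fixing_mid r a b w : (forall t, r (mid t) = mid t) ->
  matches r a b w =
  (glue a w ord0 == glue b w (r ord0)) && (glue a w ord_max == glue b w (r ord_max)).
Proof.
move=> fix_mid; rewrite /matches forall_slotE andbA.
by rewrite (_ : [forall t, _] = true) ?andbT //; apply/forallP => t; rewrite fix_mid !glue_mid.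
Qed.

End Matchings.

Lemma eq_idx2 (u v : idx 2) : (u == v) = (u ord0 == v ord0) && (u ord_max == v ord_max).
Proof.
by apply/eqP/andP => [-> // | [/eqP h0 /eqP h1]]; apply: idx2_ext.
Qed.

Lemma Wop_idx2 (u v : idx 2) :
  Wop C ord0 ord_max u v = ((u ord0 == u ord_max) && (v ord0 == v ord_max))%:R.
Proof.
rewrite /Wop (_ : [forall c, _] = true) ?andbT //.
by apply/forallP => c; case: (eqVneq c ord0) => [-> //|c0]; apply/implyP => /andP[_ cmax];
  move: c0 cmax; rewrite -!(inj_eq val_inj); case: c => -[|[|]].
Qed.

Lemma eq_in_A11 (Y Y' : op 2) : (forall u v, Y u v = Y' u v) -> in_A11 Y -> in_A11 Y'.
Proof. by move=> eqY [a [b Y_ab]]; exists a, b => u v; rewrite -eqY. Qed.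

Lemma in_A11_scale (k : C) (Y : op 2) : in_A11 Y -> in_A11 (fun u v => k * Y u v).
Proof.
by case=> a [b Y_ab]; exists (k * a), (k * b) => u v; rewrite Y_ab mulrDr !mulrA.
Qed.

Lemma in_A11_sum (I : finType) (Y : I -> op 2) :
  (forall x, in_A11 (Y x)) -> in_A11 (fun u v => \sum_x Y x u v).
Proof.
move=> Y_A11; suff: forall r, in_A11 (fun u v => \sum_(x <- r) Y x u v) by apply.
elim=> [|x r [a [b IH]]]; first by exists 0, 0 => u v; rewrite big_nil !mul0r addr0.
have [a' [b' Yx]] := Y_A11 x.
by exists (a' + a), (b' + b) => u v; rewrite big_cons Yx IH !mulrDl addrACA.
Qed.

(* The partial transposition on system 2p exchanges row and column index there, so
   the left outer values are (v_1, u_2p) and the right ones (u_1, v_2p). *)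
Definition cross (u v : idx 2) : idx 2 := [ffun c => if c == ord0 then v ord0 else u ord_max].

Lemma cross_first u v : cross u v ord0 = v ord0.
Proof. by rewrite ffunE. Qed.

Lemma cross_last u v : cross u v ord_max = u ord_max.
Proof. by rewrite ffunE. Qed.

Lemma match_count_fixing_mid_A11 m (r : {perm 'I_m.+2}) :
  (forall t, r (mid t) = mid t) ->
  in_A11 (fun u v => match_count r (cross u v) (cross v u)).
Proof.
move=> fix_mid; have [[r0 rmax] | [r0 rmax]] := perm_fixing_mid fix_mid;
  [exists #|{: idx m}|%:R, 0 | exists 0, #|{: idx m}|%:R] => u v;
  rewrite /match_count mulr_natl ?mul0r ?addr0 ?add0r;
  under eq_bigr do rewrite matches_fixing_mid // r0 rmax !glue_first !glue_last
    !cross_first !cross_last;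
  rewrite sumr_const.
  by rewrite /idop eq_idx2 [v ord0 == _]eq_sym.
by rewrite Wop_idx2 andbC [u ord_max == _]eq_sym.
Qed.

Lemma match_count_A11 m (r : {perm 'I_m.+2}) : (0 < d)%N ->
  in_A11 (fun u v => match_count r (cross u v) (cross v u)).
Proof.
move=> d_gt0; have [N] := ubnP #|moved r|; elim: N r => // N IH r /ltnSE le_rN.
case: (pickP (fun t => r (mid t) != mid t)) => [t /= t_moved | fix_mid]; last first.
  by apply: match_count_fixing_mid_A11 => t; apply/eqP/negbFE/fix_mid.
have dn0 : d%:R != 0 :> C by rewrite pnatr_eq0 -lt0n.
apply: eq_in_A11 (in_A11_scale d%:R^-1 (IH _ (leq_trans (card_moved_step t_moved) le_rN))).
by move=> u v; rewrite match_count_step // mulrA mulVf // mul1r.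
Qed.

Lemma mixidxK n (T : {set 'I_n}) (w w' : idx n) :
  mixidx T (mixidx T w w') (mixidx T w' w) = w.
Proof. by apply/ffunP => t; rewrite !ffunE; case: (t \in T). Qed.

Definition mid_perm m (rho : {perm 'I_m}) : {perm 'I_m.+2} :=
  lift_perm ord0 ord0 (lift_perm ord_max ord_max rho).

Lemma glue_relabel m (rho : {perm 'I_m}) b w c :
  glue b (relabel rho w) c = glue b w (mid_perm rho c).
Proof.
rewrite /mid_perm; case: (slotP c) => [||t]; rewrite ?lift_perm_id ?glue_first //.
  by rewrite -lift0_max lift_perm_lift lift_perm_id lift0_max !glue_last.
by rewrite /mid !lift_perm_lift -/(mid _) !glue_mid ffunE.
Qed.

Lemma ptrans_Vperm_glue m (T : {set 'I_m.+2}) (rho : {perm 'I_m}) (pi : {perm 'I_m.+2})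
    u v w :
  ord0 \notin T -> ord_max \in T ->
  ptrans T (Vperm C pi) (glue u (mixidx [set t | mid t \in T] (relabel rho w) w))
                        (glue v (mixidx [set t | mid t \in T] w (relabel rho w))) =
  (matches (pi * mid_perm rho)%g (cross u v) (cross v u) w)%:R.
Proof.
move=> T0 Tmax; set T' := [set t | _]; rewrite /ptrans /Vperm /matches; congr (nat_of_bool _)%:R.
have mixE (x y : idx 2) (k k' : idx m) :
    mixidx T (glue x k) (glue y k') = glue (cross y x) (mixidx T' k k').
  apply/ffunP => c; rewrite ffunE; case: (slotP c) => [||t];
    by rewrite ?(negbTE T0) ?Tmax ?glue_first ?glue_last ?glue_mid ?cross_first ?cross_last
      ?ffunE ?inE.
by apply: eq_forallb => c; rewrite !mixE !mixidxK permM -glue_relabel eq_sym.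
Qed.

End Operators.

Theorem fact6 (C : numClosedFieldType) (d p : nat) (hd : (2 <= d)%N) (hp : (2 <= p)%N)
  (X : op C d (nsys p)) :
  in_App p X ->
  let Xt := ptr_mid (mulop X (Vpm1 p)) in
  in_A11 Xt /\
  mulop (mulop (Vpm1 p) X) (Vpm1 p) = tens Xt (Vmid p).
Proof.
move=> [a X_span] Xt.
have V_tens : Vpm1 p = tens (@idop C d _) (rank1op (fun k => (sym_under (rev_perm _) k)%:R)).
  by rewrite Vpm1_tens Vmid_rank1.
split; last by rewrite /Xt V_tens tens_rank1_sandwich -Vmid_rank1.
set T := [set c : 'I_(nsys p) | (p.-1 < c)%N] in X_span.
have T0 : ord0 \notin T by rewrite inE.
have Tmax : ord_max \in T by rewrite inE /=; lia.
have revT t : (rev_perm _ t \in [set t | mid t \in T]) = (t \notin [set t | mid t \in T]).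
  by rewrite !inE !val_mid permE /=; case: t => t /= ht; lia.
pose rho := mid_perm (rev_perm (p.-1 + p.-1)).
have Y_A11 : in_A11 (fun u v : idx d 2 => \sum_(pi : {perm 'I_(nsys p)}) a pi *
                       match_count C (pi * rho)%g (cross u v) (cross v u)).
  by apply: in_A11_sum => pi; apply/in_A11_scale/match_count_A11; lia.
apply: eq_in_A11 Y_A11 => u v; rewrite /Xt V_tens ptr_mid_rank1.
rewrite (sum_sym_pairs (fun k k' => X (glue u k) (glue v k')) (@rev_permK _) revT).
apply: esym; under eq_bigr do rewrite X_span.
rewrite exchange_big; apply: eq_bigr => pi _; rewrite -mulr_sumr.
by congr (_ * _); apply: eq_bigr => w _; rewrite ptrans_Vperm_glue.
Qed.
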